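(* For every $d\ge1$, \[ \psi_{-1}^{(d)}(x_1,\,x_1+x_2,\,\dots,\,x_1+\cdots+x_d)=\frac{1}{x_1+\cdots+x_d}\,\bigl(\log(\mathsf{paj})\bigr)^{d}(x_1,\dots,x_d). \]
   Context: Moulds: families $M=(M^m(x_1,\dots,x_m))_{m\ge0}$ of rational functions, with product $(M\times N)^m(x_1,\dots,x_m)=\sum_{k=0}^mM^k(x_1,\dots,x_k)N^{m-k}(x_{k+1},\dots,x_m)$ and unit $1$ (equal to $1$ in length $0$ and $0$ otherwise). $\mathsf{paj}^0=1$ and $\mathsf{paj}^m(x_1,\dots,x_m)=\frac1{x_1(x_1+x_2)\cdots(x_1+\cdots+x_m)}$ for $m\ge1$. $\log(\mathsf{paj}):=\sum_{h\ge1}\frac{(-1)^{h+1}}{h}(\mathsf{paj}-1)^{\times h}$ (powers for the product $\times$; finite in each length). Vines: a bunch of $n$ grapes $g_n$ on labels $\{i,\dots,i+n\}$ is the tree with edges joining the stalk $i$ to each grape $i+1,\dots,i+n$. A vine with $d$ grapes is a sequence $v=g_{n_1}\cdots g_{n_k}$ with $n_j\ge1$, $n_1+\cdots+n_k=d$, giving the rooted tree on $\{0,1,\dots,d\}$ (root $0$) obtained by taking $g_{n_1}$ on $\{0,\dots,n_1\}$ and successively grafting $g_{n_j}$ on labels $\{n_1+\cdots+n_{j-1},\dots,n_1+\cdots+n_j\}$, its stalk being identified with the highest-labelled grape $n_1+\cdots+n_{j-1}$ of the previous vine. Its height is $h(v)=k$. $\mathcal V_d$ is the set of vines with $d$ grapes.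 With $x_0=0$, $x_v=\prod_{(i,j)}(x_j-x_i)$ over edges $(i,j)$ of $v$ with $i<j$. Define $\psi_{-1}^{(d)}(x_1,\dots,x_d)=\sum_{v\in\mathcal V_d}\frac{(-1)^{h(v)+1}}{h(v)}\frac{1}{x_v\,x_d}$. *)

From HB Require Import structures.
From mathcomp Require Import all_boot all_order all_algebra.
Set Implicit Arguments. Unset Strict Implicit. Unset Printing Implicit Defensive.
Import Order.TTheory GRing.Theory Num.Theory.
Local Open Scope ring_scope.

Section Moulds.
Variable R : numFieldType.

(* A mould, evaluated pointwise: M s is M^m(s_1,...,s_m) with m = size s. *)
Definition mould := seq R -> R.

Definition mone : mould := fun s => if s is [::] then 1 else 0.

Definition mmul (M N : mould) : mould :=
  fun s => \sum_(k < (size s).+1) M (take k s) * N (drop k s).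

Definition msub (M N : mould) : mould := fun s => M s - N s.

Definition mpow (M : mould) (h : nat) : mould := iter h (mmul M) mone.

Definition paj : mould :=
  fun s => \prod_(1 <= k < (size s).+1) (\sum_(i < k) s`_i)^-1.

(* log M = sum_{h>=1} (-1)^(h+1)/h (M-1)^h.  When (M-1) vanishes in length 0
   (as for paj), (M-1)^h vanishes in every length < h, so in length m only the
   terms h = 1..m contribute; we sum exactly those. *)
Definition mlog (M : mould) : mould :=
  fun s => \sum_(1 <= h < (size s).+1)
             ((-1) ^+ h.+1 / h%:R) * mpow (msub M mone) h s.

(* Vines with d grapes <-> compositions (n_1,...,n_k) of d with n_j >= 1. *)
Definition is_vine (d : nat) (c : seq nat) : bool :=
  all (fun n => 0 < n)%N c && (sumn c == d).

(* x_v = prod over edges (i,j), i<j, of (x_j - x_i), for the vine c;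
   the j-th bunch has stalk s_j = n_1+...+n_{j-1} and grapes s_j+1..s_j+n_j.
   x : nat -> R is indexed by labels, with x 0 = 0. *)
Definition xvine (c : seq nat) (x : nat -> R) : R :=
  \prod_(j < size c)
     \prod_(1 <= t < (nth 0%N c j).+1)
        (x (sumn (take j c) + t)%N - x (sumn (take j c))).

Definition lab (s : seq R) (i : nat) : R :=
  if i is i'.+1 then s`_i' else 0.

Definition psi_m1 (s : seq R) : R :=
  let d := size s in
  \sum_(k < d.+1) \sum_(t : k.-tuple 'I_d.+1 | is_vine d (map val t))
     ((-1) ^+ k.+1 / k%:R) / (xvine (map val t) (lab s) * lab s d).

End Moulds.

From HB Require Import structures.
From mathcomp Require Import all_boot all_order all_algebra.
From mathcomp Require Import zify ring.
Set Implicit Arguments. Unset Strict Implicit. Unset Printing Implicit Defensive.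
Import Order.TTheory GRing.Theory Num.Theory.
Local Open Scope ring_scope.

(* In length d, the h-th power of paj - 1 is a sum over the compositions
   (n_1, ..., n_h) of d, i.e. over the vines of height h, of the product of
   paj over the consecutive blocks of lengths n_1, ..., n_h.  At the point of
   partial sums X_i = x_1 + ... + x_i, the factors of paj on the block of
   grapes s+1, ..., s+n are X_(s+t) - X_s, which are exactly the edge factors
   of the bunch with stalk s; so each vine contributes 1 / x_v to both sides,
   and the remaining factor 1 / X_d is the prefactor of the theorem. *)

Lemma is_vine_cons (m a : nat) (c : seq nat) :
  is_vine m (a :: c) = [&& (0 < a)%N, (a <= m)%N & is_vine (m - a) c].
Proof.
rewrite /is_vine /=; case: (ltnP 0 a) => //= _.
case: (leqP a m) => Ham /=; first by congr (_ && _); apply/eqP/eqP; lia.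
by apply/andP => -[_ /eqP]; lia.
Qed.

Section VineSums.
Variable R : numFieldType.

Fixpoint sum_vines (h m : nat) (f : seq nat -> R) : R :=
  if h is h'.+1 then
    \sum_(a < m.+1 | (0 < a)%N) sum_vines h' (m - a) (fun c => f (val a :: c))
  else (m == 0)%:R * f [::].

Lemma eq_sum_vines h m (f g : seq nat -> R) :
  (forall c, is_vine m c -> f c = g c) -> sum_vines h m f = sum_vines h m g.
Proof.
elim: h m f g => [|h IH] m f g efg /=.
  by case: m efg => [|m] efg; rewrite ?mul0r // efg.
apply: eq_bigr => a a_gt0; apply: IH => c vine_c; apply: efg.
by rewrite is_vine_cons a_gt0 vine_c -ltnS ltn_ord.
Qed.

Lemma sum_vinesZ h m (f : seq nat -> R) k :
  sum_vines h m (fun c => k * f c) = k * sum_vines h m f.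
Proof.
elim: h m f => [|h IH] m f /=; first by rewrite mulrCA.
by rewrite mulr_sumr; apply: eq_bigr => a _; apply: IH.
Qed.

Lemma cons_tuple_bij N h :
  bijective (fun p : 'I_N * h.-tuple 'I_N => [tuple of p.1 :: p.2]).
Proof.
exists (fun t : h.+1.-tuple 'I_N => (thead t, [tuple of behead t])).
  by case=> a t /=; congr (_, _); apply: val_inj.
by move=> t; apply: val_inj; case: t => -[|a s].
Qed.

Lemma sum_vine_tuples N h m (f : seq nat -> R) : (m < N)%N ->
  \sum_(t : h.-tuple 'I_N | is_vine m (map val t)) f (map val t)
  = sum_vines h m f.
Proof.
elim: h m f => [|h IH] m f ltmN /=.
  rewrite big_mkcond (eq_bigr (fun=> if is_vine m [::] then f [::] else 0));
    last by move=> t _; rewrite tuple0.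
  rewrite sumr_const card_tuple expn0 /is_vine /= eq_sym.
  by case: (m == 0); rewrite ?mul1r ?mul0r.
rewrite big_mkcond (reindex _ (onW_bij _ (@cons_tuple_bij N h))) /=.
rewrite -(pair_big xpredT xpredT (fun a (t : h.-tuple 'I_N) =>
  if is_vine m (map val (a :: t)) then f (map val (a :: t)) else 0)) /=.
rewrite (big_ord_widen_cond _ (fun a => (0 < a)%N)
  (fun a => sum_vines h (m - a) (fun c => f (a :: c))) ltmN) [RHS]big_mkcond.
apply: eq_bigr => a _; under eq_bigr => t _ do rewrite is_vine_cons.
case: (ltnP 0 a) => [a_gt0|_]; last by rewrite big1.
rewrite ltnS; case: (leqP a m) => [lt_am|_]; last by rewrite big1.
by rewrite -big_mkcond -IH //; lia.
Qed.

Fixpoint paj_blocks (c : seq nat) (s : seq R) : R :=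
  if c is n :: c' then paj (take n s) * paj_blocks c' (drop n s) else 1.

Lemma mpow_paj_sub1 h (s : seq R) :
  mpow (msub (@paj R) (@mone R)) h s
  = sum_vines h (size s) (fun c => paj_blocks c s).
Proof.
elim: h s => [|h IH] s /=; first by case: s => [|a s] /=; rewrite ?mulr1.
rewrite /mmul [RHS]big_mkcond; apply: eq_bigr => k _.
rewrite IH size_drop; case: (posnP k) => [k0|k_gt0].
  by rewrite k0 take0 /msub /paj big_geq // subrr mul0r.
rewrite sum_vinesZ /msub; case: (take k s) (size_takel (ltnSE (ltn_ord k)))
  => [|a t] /=; [lia | by rewrite subr0].
Qed.

Lemma xvine_cons n c (X : nat -> R) :
  xvine (n :: c) X
  = \prod_(1 <= t < n.+1) (X t - X 0%N) * xvine c (fun i => X (n + i)%N).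
Proof.
rewrite /xvine big_ord_recl; congr (_ * _).
by apply: eq_bigr => j _; apply: eq_bigr => t _; rewrite /= addnA.
Qed.

Lemma invf_xvine c (x : seq R) (X : nat -> R) :
  (forall i j, (j <= i <= size x)%N -> X i - X j = \sum_(j <= k < i) x`_k) ->
  is_vine (size x) c -> (xvine c X)^-1 = paj_blocks c x.
Proof.
elim: c x X => [|n c IH] x X dX /=; first by rewrite /xvine big_ord0 invr1.
rewrite is_vine_cons => /and3P[n_gt0 le_nx vine_c].
rewrite xvine_cons invfM; congr (_ * _).
  rewrite /paj size_takel // -prodfV; apply: eq_big_nat => t /andP[t_gt0 le_tn].
  rewrite dX; last by lia.
  rewrite big_mkord; congr _^-1; apply: eq_bigr => i _.
  by rewrite nth_take //; have := ltn_ord i; lia.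
apply: IH; last by rewrite size_drop.
move=> i j; rewrite size_drop => le_ji.
rewrite dX; last by lia.
rewrite (addnC n j) big_addn addKn; apply: eq_bigr => k _.
by rewrite nth_drop addnC.
Qed.

Definition partial_sums (x : seq R) : seq R :=
  [seq \sum_(k < i.+1) x`_k | i <- iota 0 (size x)].

Lemma lab_partial_sums (x : seq R) i :
  (i <= size x)%N -> lab (partial_sums x) i = \sum_(k < i) x`_k.
Proof.
case: i => [|i] le_ix /=; first by rewrite big_ord0.
by rewrite (nth_map 0%N) ?size_iota // nth_iota.
Qed.

Lemma lab_partial_sumsB (x : seq R) i j : (j <= i <= size x)%N ->
  lab (partial_sums x) i - lab (partial_sums x) j = \sum_(j <= k < i) x`_k.
Proof.
move=> /andP[le_ji le_ix].
rewrite !lab_partial_sums //; last exact: leq_trans le_ix.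
rewrite -!(big_mkord xpredT) (@big_cat_nat _ _ _ j 0 i) //=.
by rewrite addrC addrK.
Qed.

End VineSums.

Theorem theorem2p8 (R : numFieldType) (d : nat) (x : seq R) :
  (1 <= d)%N -> size x = d ->
  (forall i j : nat, (i < j <= d)%N -> \sum_(i <= k < j) x`_k != 0) ->
  psi_m1 [seq \sum_(k < i.+1) x`_k | i <- iota 0 d]
  = (\sum_(k < d) x`_k)^-1 * mlog (@paj R) x.
Proof.
move=> _ <- _; rewrite -/(partial_sums x).
set X := lab (partial_sums x).
have XdE : X (size x) = \sum_(k < size x) x`_k by exact: lab_partial_sums.
have vine_termE (k : nat) :
  sum_vines k (size x) (fun c => (-1) ^+ k.+1 / k%:R / (xvine c X * X (size x)))
  = (-1) ^+ k.+1 / k%:R * (X (size x))^-1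
    * sum_vines k (size x) (fun c => paj_blocks c x).
  rewrite -sum_vinesZ; apply: eq_sum_vines => c vine_c.
  by rewrite invfM -(invf_xvine (@lab_partial_sumsB R x) vine_c); ring.
rewrite /psi_m1 /= size_map size_iota.
under eq_bigr => k _ do rewrite (@sum_vine_tuples R _ k _
  (fun c => (-1) ^+ k.+1 / k%:R / (xvine c X * X (size x))) (ltnSn _)) vine_termE.
rewrite /mlog mulr_sumr big_ord_recl invr0 mulr0 !mul0r add0r big_add1 big_mkord.
by apply: eq_bigr => k _; rewrite mpow_paj_sub1 -XdE mulrCA mulrA.
Qed.
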